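(* Let $k\ge 3$ and $n_1,\dots,n_k\ge 2$. The LC orbit of the complete $k$-partite graph $K_{n_1,\dots,n_k}$ has size $$|\mathcal{O}(K_{n_1,\dots,n_k})|=\sum_{\substack{I\subseteq[k]\\ |I|\text{ even}}}\prod_{i\in I}n_i+\sum_{j=1}^k\prod_{i\in[k]\setminus\{j\}}(n_i+1),$$ where $[k]=\{1,\dots,k\}$ and the empty product equals $1$ (equivalently, the first sum consists of the terms of the full expansion of $\prod_{i=1}^k(n_i+1)$ that are products of an even number of the $n_i$).
   Context: $K_{n_1,\dots,n_k}$ has vertex set $U_1\sqcup\cdots\sqcup U_k$ with $|U_i|=n_i$ and edges exactly between vertices in different parts. The local complement $c_v(G)$ complements the edges among the neighbours of $v$. $\mathcal{O}(G)$ is the set of all graphs on the labelled vertex set $V(G)$ obtainable from $G$ by finite sequences of local complements (labelled graphs are counted). *)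

From mathcomp Require Import all_boot.
Set Implicit Arguments. Unset Strict Implicit. Unset Printing Implicit Defensive.

(* A simple graph on a labelled finite vertex set V is represented by its
   (symmetric, irreflexive) set of ordered adjacent pairs. *)
Definition graph (V : finType) := {set V * V}.

Definition lc (V : finType) (v : V) (G : graph V) : graph V :=
  [set p | if [&& p.1 != p.2, (v, p.1) \in G & (v, p.2) \in G]
           then p \notin G else p \in G].

Definition lc_step (V : finType) : rel (graph V) :=
  fun G H => [exists v : V, H == lc v G].

Definition lc_orbit (V : finType) (G : graph V) : {set graph V} :=
  [set H | connect (@lc_step V) G H].

Definition kpart_vertex (k : nat) (n : 'I_k -> nat) : finType :=
  {i : 'I_k & 'I_(n i)}.

Definition complete_multipartite (k : nat) (n : 'I_k -> nat)
  : graph (kpart_vertex n) :=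
  [set p | tag p.1 != tag p.2].

From mathcomp Require Import all_boot.
Set Implicit Arguments. Unset Strict Implicit. Unset Printing Implicit Defensive.

(* Every graph of the orbit is described by a parameter (c, s): s selects at
   most one vertex in some of the parts, and c is either "no centre", with an
   even number of selected parts, or an unselected centre part j.  Call a vertex
   active if it is selected or its part has no selected vertex.  Without centre,
   two vertices of different parts are adjacent iff both are active, and inside a
   part the selected vertex is joined to the others.  With centre j, part j is
   joined to all active vertices, there are no other edges between parts, a
   part other than j is a star at its selected vertex or a clique, and part j is
   a clique iff an odd number of parts is selected.
   Local complementation at v acts on parameters by an explicit involution; the
   adjacency of x and y before and after only depends on a few bits of data
   attached to v, x, y, so compatibility is a finite check.  Every parameter is
   reached from the empty one, whose graph is K_{n_1,...,n_k}, and when k >= 3 and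
   all n_i >= 2 the graph determines the parameter: the active vertices are those
   adjacent to a centre vertex, resp. to active vertices of other parts.  Counting
   parameters without centre by their set of selected parts, and those with centre
   j part by part, gives the two sums. *)

Section LocalComplement.
Variables (V : finType) (G : graph V) (v : V).

Lemma in_lc x y : x != y ->
  ((x, y) \in lc v G) = ((v, x) \in G) && ((v, y) \in G) (+) ((x, y) \in G).
Proof. by move=> xy; rewrite inE /= xy; case: ((v, x) \in G); case: ((v, y) \in G). Qed.

Lemma lc_pendant : (forall x y, (v, x) \in G -> (v, y) \in G -> x = y) -> lc v G = G.
Proof.
move=> nbv1; apply/setP => -[x y]; rewrite inE /=.
by case: ifP => // /and3P [xy Gx Gy]; rewrite (nbv1 x y Gx Gy) eqxx in xy.
Qed.

Lemma lc_involutive : (v, v) \notin G -> lc v (lc v G) = G.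
Proof.
move=> Gvv; have lcN x : ((v, x) \in lc v G) = ((v, x) \in G).
  by rewrite inE /=; case: ifP => // /and3P [_ Gv _]; rewrite Gv in Gvv.
by apply/setP => -[x y]; rewrite inE /= !lcN inE /=; case: [&& _, _ & _]; rewrite ?negbK.
Qed.

End LocalComplement.

Lemma sum_option (T : finType) (F : option T -> nat) :
  \sum_(o : option T) F o = F None + \sum_(x : T) F (Some x).
Proof.
rewrite (bigD1 None) //=; congr (_ + _).
by rewrite (reindex_omap Some id) => [|[x|] //=]; apply: eq_bigl => x; rewrite eqxx.
Qed.

Lemma card_option_pred (T : finType) (P : pred (option T)) :
  #|P| = P None + #|[pred x | P (Some x)]|.
Proof. by rewrite -!sum1_card !big_mkcond sum_option [in RHS]big_mkcond. Qed.

(* Adjacency of two distinct vertices x, y in terms of: [same], x and y lie in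
   the same part; [sx], x is selected; [ix], the part of x has a selected vertex;
   [cx], x lies in the centre part; [o], the number of selected parts is odd. *)
Definition centerless_adj (same sx sy ix iy : bool) :=
  if same then sx (+) sy else (~~ ix || sx) && (~~ iy || sy).

Definition centered_adj (same cx cy o sx sy ix iy : bool) :=
  if same then (if cx then o else sx (+) sy (+) ~~ ix)
  else if cx then ~~ iy || sy else cy && (~~ ix || sx).

Definition transitive3 (eab eac ebc : bool) :=
  [&& eab && eac ==> ebc, eab && ebc ==> eac & eac && ebc ==> eab].

Lemma transitive3_eq (T : eqType) (a b c : T) : transitive3 (a == b) (a == c) (b == c).
Proof. by apply/and3P; split; apply/implyP => /andP [/eqP -> /eqP ->]. Qed.

Definition pair_realizable (same eq sa sb ia ib ca cb : bool) :=
  [&& eq ==> [&& same, sa == sb & ia == ib], [&& same, sa & sb] ==> eq,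
      sa ==> ia, sb ==> ib, same ==> (ia == ib), same ==> (ca == cb),
      ca && cb ==> same, ca ==> ~~ ia & cb ==> ~~ ib].

Definition realizable (pvx pvy pxy xv yv sv sx sy iv ix iy cv cx cy : bool) :=
  [&& transitive3 pvx pvy pxy, ~~ (xv && yv),
      pair_realizable pvx xv sv sx iv ix cv cx, pair_realizable pvy yv sv sy iv iy cv cy
    & pair_realizable pxy false sx sy ix iy cx cy].

Fixpoint boolfun (m : nat) : Type := if m is m'.+1 then bool -> boolfun m' else bool.

Fixpoint tautb (m : nat) : boolfun m -> bool :=
  if m is m'.+1 return boolfun m -> bool then fun F => tautb (F true) && tautb (F false)
  else id.

Fixpoint taut (m : nat) : boolfun m -> Prop :=
  if m is m'.+1 return boolfun m -> Prop then fun F => forall b, taut (F b)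
  else is_true.

Lemma tautbP m (F : boolfun m) : tautb F -> taut F.
Proof. by elim: m F => [|m IHm] F //= /andP [Ft Ff] []; apply: IHm. Qed.

Lemma centerless_adj_lc pvx pvy pxy xv yv sv sx sy iv ix iy :
  realizable pvx pvy pxy xv yv sv sx sy iv ix iy false false false -> ~~ (iv && ~~ sv) ->
  (~~ xv && centerless_adj pvx sv sx iv ix) && (~~ yv && centerless_adj pvy sv sy iv iy)
    (+) centerless_adj pxy sx sy ix iy
  = centered_adj pxy pvx pvy iv (~~ pvx && sx) (~~ pvy && sy) (~~ pvx && ix) (~~ pvy && iy).
Proof.
move=> r a; apply/eqP; move: a; apply/implyP; move: r; apply/implyP.
by move: pvx pvy pxy xv yv sv sx sy iv ix iy; apply: (@tautbP 11); vm_compute.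
Qed.

Lemma centered_adj_lc pvx pvy pxy xv yv sv sx sy iv ix iy cv cx cy o :
  realizable pvx pvy pxy xv yv sv sx sy iv ix iy cv cx cy -> ~~ cv -> ~~ iv ->
  (~~ xv && centered_adj pvx cv cx o sv sx iv ix)
    && (~~ yv && centered_adj pvy cv cy o sv sy iv iy) (+) centered_adj pxy cx cy o sx sy ix iy
  = centered_adj pxy cx cy (~~ o) (if pvx then xv else sx) (if pvy then yv else sy)
      (pvx || ix) (pvy || iy).
Proof.
move=> r c a; apply/eqP; move: a; apply/implyP; move: c; apply/implyP; move: r; apply/implyP.
by move: pvx pvy pxy xv yv sv sx sy iv ix iy cv cx cy o; apply: (@tautbP 15); vm_compute.
Qed.

Section Multipartite.
Variables (k : nat) (n : 'I_k -> nat).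
Local Notation V := (kpart_vertex n).
Local Notation transversal := {ffun 'I_k -> option V}.

Definition param := (option 'I_k * transversal)%type.

Implicit Types (s : transversal) (d : param) (c : option 'I_k) (v x y z : V).

Definition sel s x := s (tag x) == Some x.
Definition supported s x := isSome (s (tag x)).
Definition pendant s x := supported s x && ~~ sel s x.
Definition active s x := ~~ supported s x || sel s x.
Definition supp s := [set i | isSome (s i)].
Definition in_center c x := if c is Some j then j == tag x else false.

Definition adj d x y :=
  let: (c, s) := d in
  if c is Some j then
    centered_adj (tag x == tag y) (j == tag x) (j == tag y) (odd #|supp s|)
      (sel s x) (sel s y) (supported s x) (supported s y)
  else centerless_adj (tag x == tag y) (sel s x) (sel s y) (supported s x) (supported s y).

Definition graph_of d : graph V := [set p | (p.1 != p.2) && adj d p.1 p.2].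

Definition respects_parts s := [forall i, if s i is Some x then tag x == i else true].

Definition admissible d :=
  let: (c, s) := d in
  respects_parts s && (if c is Some j then s j == None else ~~ odd #|supp s|).

Definition upd s i (o : option V) : transversal :=
  [ffun l => if l == i then o else s l].

(* A pendant vertex has the selected vertex of its part as only neighbour, so
   LC at it is trivial. *)
Definition param_lc v d : param :=
  let: (c, s) := d in
  if pendant s v then d else
  if c is Some j then
    if j == tag v then (None, upd s j (if odd #|supp s| then Some v else None))
    else (c, upd s (tag v) (if ~~ sel s v then Some v else None))
  else (Some (tag v), upd s (tag v) None).

Lemma sel_upd s i o x :
  sel (upd s i o) x = if i == tag x then o == Some x else sel s x.
Proof. by rewrite /sel ffunE (eq_sym (tag x)); case: ifP. Qed.

Lemma supported_upd s i o x :
  supported (upd s i o) x = if i == tag x then isSome o else supported s x.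
Proof. by rewrite /supported ffunE (eq_sym (tag x)); case: ifP. Qed.

Lemma sel_upd_None s i x : sel (upd s i None) x = (i != tag x) && sel s x.
Proof. by rewrite sel_upd; case: eqP. Qed.

Lemma sel_upd_Some s i v x :
  sel (upd s i (Some v)) x = if i == tag x then v == x else sel s x.
Proof. by rewrite sel_upd (inj_eq (@Some_inj _)). Qed.

Lemma supported_upd_None s i x :
  supported (upd s i None) x = (i != tag x) && supported s x.
Proof. by rewrite supported_upd; case: eqP. Qed.

Lemma supported_upd_Some s i v x :
  supported (upd s i (Some v)) x = (i == tag x) || supported s x.
Proof. by rewrite supported_upd; case: eqP. Qed.

Lemma card_supp_upd s i o :
  #|supp (upd s i o)| + isSome (s i) = #|supp s| + isSome o.
Proof.
have suppD : supp (upd s i o) :\ i = supp s :\ i.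
  by apply/setP => l; rewrite !inE ffunE; case: eqP.
rewrite [#|supp s|](cardsD1 i) [#|supp (upd s i o)|](cardsD1 i) suppD !inE ffunE eqxx.
by rewrite addnC [_ + #|_|]addnC addnA.
Qed.

Lemma odd_supp_upd s i o :
  odd #|supp (upd s i o)| = odd #|supp s| (+) isSome (s i) (+) isSome o.
Proof.
have := congr1 odd (card_supp_upd s i o); rewrite !oddD !oddb => E.
by rewrite -addbA (addbC (isSome (s i))) addbA -E -addbA addbb addbF.
Qed.

Lemma upd_id s i : upd s i (s i) = s.
Proof. by apply/ffunP => l; rewrite ffunE; case: eqP => [->|]. Qed.

Lemma upd_upd s i o o' : upd (upd s i o) i o' = upd s i o'.
Proof. by apply/ffunP => l; rewrite !ffunE; case: eqP. Qed.

Lemma respects_partsP s i x : respects_parts s -> s i = Some x -> tag x = i.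
Proof. by move=> /forallP /(_ i) + si; rewrite si => /eqP. Qed.

Lemma respects_parts_upd s i o :
  respects_parts s -> (if o is Some x then tag x == i else true) ->
  respects_parts (upd s i o).
Proof.
by move=> /forallP rs ro; apply/forallP => l; rewrite ffunE; case: eqP => [->|_].
Qed.

Lemma graph_of_irrefl d x : (x, x) \notin graph_of d.
Proof. by rewrite inE /= eqxx. Qed.

Lemma lc_graph_ofE v d d' :
  (forall x y, x != y ->
     ((v != x) && adj d v x) && ((v != y) && adj d v y) (+) adj d x y = adj d' x y) ->
  lc v (graph_of d) = graph_of d'.
Proof.
move=> adj'; apply/setP => -[x y]; have [<-|xy] := eqVneq x y.
  by rewrite !inE /= eqxx.
by rewrite in_lc // !inE /= xy adj'.
Qed.

Lemma pair_realizable_vertices c s a b : admissible (c, s) ->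
  pair_realizable (tag a == tag b) (a == b) (sel s a) (sel s b)
    (supported s a) (supported s b) (in_center c a) (in_center c b).
Proof.
case/andP => _ sc.
have selS x : sel s x ==> supported s x by apply/implyP; rewrite /sel /supported => /eqP ->.
have centerN x : in_center c x ==> ~~ supported s x.
  by case: c sc => [j /eqP sj|//]; apply/implyP => /eqP jx; rewrite /supported -jx sj.
rewrite /pair_realizable !selS !centerN /= !andbT.
apply/and5P; split.
- by apply/implyP => /eqP ->; rewrite !eqxx.
- apply/implyP => /and3P [/eqP tab /eqP sa /eqP sb].
  by move: sa; rewrite tab sb => -[->].
- by apply/implyP; rewrite /supported => /eqP ->.
- by apply/implyP => /eqP tab; rewrite /in_center tab.
- by case: c {sc centerN} => [j|//]; apply/implyP => /andP [/eqP <- /eqP <-].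
Qed.

Lemma realizable_vertices c s v x y : admissible (c, s) -> x != y ->
  realizable (tag v == tag x) (tag v == tag y) (tag x == tag y) (v == x) (v == y)
    (sel s v) (sel s x) (sel s y) (supported s v) (supported s x) (supported s y)
    (in_center c v) (in_center c x) (in_center c y).
Proof.
move=> adm xy; rewrite /realizable transitive3_eq !pair_realizable_vertices //=.
rewrite -(negbTE xy) pair_realizable_vertices //.
by rewrite andbT; apply: contra xy => /andP [/eqP <- /eqP <-].
Qed.

Lemma lc_graph_of_centerless s v : admissible (None, s) -> ~~ pendant s v ->
  lc v (graph_of (None, s)) = graph_of (param_lc v (None, s)).
Proof.
move=> adm npv; have /andP [_ /negbTE even] := adm.
rewrite /param_lc (negbTE npv); apply: lc_graph_ofE => x y xy /=.
rewrite !sel_upd_None !supported_upd_None odd_supp_upd even /=; rewrite addbF.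
exact: centerless_adj_lc (realizable_vertices v adm xy) npv.
Qed.

Lemma lc_graph_of_unsupported j s v : admissible (Some j, s) -> j != tag v ->
  ~~ supported s v -> lc v (graph_of (Some j, s)) = graph_of (param_lc v (Some j, s)).
Proof.
move=> adm jv nsv; have nsel : sel s v = false.
  by apply: contraNF nsv; rewrite /sel /supported => /eqP ->.
rewrite /param_lc /pendant (negbTE nsv) (negbTE jv) nsel /=; apply: lc_graph_ofE => x y xy /=.
rewrite !sel_upd_Some !supported_upd_Some odd_supp_upd.
rewrite (negbTE nsv : isSome (s (tag v)) = false) addbF addbT.
exact: centered_adj_lc (realizable_vertices v adm xy) jv nsv.
Qed.

Lemma nonpendant_choice s v : ~~ pendant s v -> s (tag v) = if sel s v then Some v else None.
Proof. by rewrite /pendant /sel /supported; case: (s (tag v)) => [w|]; case: eqP => [->|] /=. Qed.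

Lemma pendant_upd_None s v : pendant (upd s (tag v) None) v = false.
Proof. by rewrite /pendant supported_upd_None eqxx. Qed.

Lemma pendant_upd_Some s v : pendant (upd s (tag v) (Some v)) v = false.
Proof. by rewrite /pendant sel_upd_Some !eqxx andbF. Qed.

Lemma param_lc_pendant c s v : pendant s v -> param_lc v (c, s) = (c, s).
Proof. by rewrite /param_lc => ->. Qed.

Lemma param_lc_involutive v d : admissible d -> param_lc v (param_lc v d) = d.
Proof.
case: d => c s /andP [_ sc]; have [pv|npv] := boolP (pendant s v).
  by rewrite !param_lc_pendant.
have sv := nonpendant_choice npv; rewrite {2}/param_lc (negbTE npv).
case: c sc => [j /eqP sj|even].
  have [ejv|jv] := eqVneq j (tag v).
    subst j; rewrite /param_lc.
    by case: (odd _); rewrite ?pendant_upd_None ?pendant_upd_Some upd_upd -sj upd_id.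
  rewrite /param_lc (negbTE jv); case: (sel s v) sv => /= sv.
    by rewrite pendant_upd_None sel_upd_None eqxx upd_upd -sv upd_id.
  by rewrite pendant_upd_Some sel_upd_Some !eqxx upd_upd -sv upd_id.
rewrite /param_lc pendant_upd_None eqxx upd_upd odd_supp_upd (negbTE even) /= addbF.
by case: (sel s v) sv => sv; rewrite sv /= -sv upd_id.
Qed.

Lemma admissible_param_lc v d : admissible d -> admissible (param_lc v d).
Proof.
case: d => c s /andP [rs sc]; have [pv|npv] := boolP (pendant s v).
  by rewrite param_lc_pendant //; apply/andP.
rewrite /param_lc (negbTE npv); case: c sc => [j /eqP sj|even].
  have [ejv|jv] := eqVneq j (tag v).
    subst j; rewrite /= respects_parts_upd //=; last by case: (odd _).
    by rewrite odd_supp_upd sj /=; case: (odd _).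
  by rewrite /= respects_parts_upd ?ffunE 1?eq_sym ?(negbTE jv) ?sj //=; case: (~~ _).
by rewrite /= respects_parts_upd // ffunE eqxx.
Qed.

Lemma pendant_neighbor c s v x : admissible (c, s) -> pendant s v ->
  adj (c, s) v x -> s (tag v) = Some x.
Proof.
case/andP => _ sc /andP [sv /negbTE nsel] a.
have cv : in_center c v = false.
  by case: c sc {a} => [j /eqP sj|//]; apply: contraTF sv => /eqP jv; rewrite /supported -jv sj.
suff /andP [/eqP tvx sx] : (tag v == tag x) && sel s x by rewrite tvx (eqP sx).
case: c {sc} cv a => [j /= jv|_]; rewrite /adj /centerless_adj /centered_adj ?jv nsel sv;
  by case: (tag v == tag x); rewrite /= ?addbF ?andbF.
Qed.

Lemma lc_graph_of v d : admissible d -> lc v (graph_of d) = graph_of (param_lc v d).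
Proof.
case: d => c s adm; have [pv|npv] := boolP (pendant s v).
  rewrite param_lc_pendant //; apply: lc_pendant => x y; rewrite !inE /=.
  move=> /andP [_ /(pendant_neighbor adm pv) vx] /andP [_ /(pendant_neighbor adm pv)].
  by rewrite vx => -[].
(* If v lies in the centre or is selected, [param_lc v (c, s)] falls under
   [lc_graph_of_centerless] or [lc_graph_of_unsupported], and both [lc v] and
   [param_lc v] are involutions. *)
have swap : lc v (graph_of (param_lc v (c, s))) = graph_of (c, s) ->
    lc v (graph_of (c, s)) = graph_of (param_lc v (c, s)).
  by move=> <-; rewrite lc_involutive // graph_of_irrefl.
have adm' := admissible_param_lc v adm; have inv := param_lc_involutive v adm.
case: c adm adm' inv swap => [j|] adm adm' inv swap; last exact: lc_graph_of_centerless.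
have sv := nonpendant_choice npv.
have [ejv|jv] := eqVneq j (tag v).
  subst j; pose e := if odd #|supp s| then Some v else None.
  have E : param_lc v (Some (tag v), s) = (None, upd s (tag v) e).
    by rewrite /param_lc (negbTE npv) eqxx.
  apply: swap; rewrite -{2}inv E; apply: lc_graph_of_centerless; first by rewrite -E.
  by rewrite /e; case: (odd _); rewrite ?pendant_upd_None ?pendant_upd_Some.
case: (boolP (sel s v)) => selv; last first.
  by apply: lc_graph_of_unsupported; rewrite // /supported sv (negbTE selv).
have E : param_lc v (Some j, s) = (Some j, upd s (tag v) None).
  by rewrite /param_lc (negbTE npv) (negbTE jv) selv.
apply: swap; rewrite -{2}inv E; apply: lc_graph_of_unsupported => //; first by rewrite -E.
by rewrite supported_upd_None eqxx.
Qed.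

Definition part_choices i (some none : bool) : pred (option V) :=
  fun o => if o is Some x then some && (tag x == i) else none.

Lemma card_part i : #|[pred x : V | tag x == i]| = n i.
Proof.
transitivity #|image (Tagged (fun i => 'I_(n i))) 'I_(n i)|.
  apply: eq_card => -[j a]; rewrite inE /=.
  by apply/eqP/imageP => [ji|[b _ /(congr1 tag)] //]; subst j; exists a.
by rewrite card_image ?card_ord //; apply: eq_from_Tagged.
Qed.

Lemma card_part_choices i some none : #|part_choices i some none| = none + some * n i.
Proof.
rewrite card_option_pred; congr (_ + _); case: some; rewrite ?mul1n ?mul0n.
  by rewrite -(card_part i); apply: eq_card => x; rewrite !inE.
exact: eq_card0.
Qed.

Lemma card_transversals_in (F : 'I_k -> pred (option V)) :
  #|[set s : transversal | [forall i, s i \in F i]]| = \prod_i #|F i|.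
Proof.
have -> : #|[set s : transversal | [forall i, s i \in F i]]| = #|family F|.
  by apply: eq_card => s; rewrite inE; apply/forallP/familyP.
by rewrite card_family foldrE big_map big_enum.
Qed.

Lemma card_centered j :
  #|[set s | admissible (Some j, s)]| = \prod_(i < k | i != j) (n i).+1.
Proof.
have -> : [set s | admissible (Some j, s)] =
    [set s : transversal | [forall i, s i \in part_choices i (i != j) true]].
  apply/setP => s; rewrite !inE /=; apply/andP/forallP => [[/forallP rs /eqP sj] i | si].
    by have [->|ij] := eqVneq i j; rewrite unfold_in /= ?sj //; case: (s i) (rs i).
  split; last by have := si j; rewrite unfold_in eqxx; case: (s j).
  by apply/forallP => i; have := si i; rewrite unfold_in; case: (s i) => // x /andP [].
rewrite card_transversals_in (bigD1 j) //= card_part_choices eqxx mul0n mul1n.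
by apply: eq_bigr => i ij; rewrite card_part_choices ij mul1n.
Qed.

Lemma card_supp_eq I :
  #|[set s | respects_parts s && (supp s == I)]| = \prod_(i in I) n i.
Proof.
have -> : [set s | respects_parts s && (supp s == I)] =
    [set s : transversal | [forall i, s i \in part_choices i (i \in I) (i \notin I)]].
  apply/setP => s; rewrite !inE; apply/andP/forallP => [[/forallP rs /eqP <-] i | si].
    by rewrite unfold_in inE; case: (s i) (rs i).
  split; first by apply/forallP => i; have := si i; rewrite unfold_in; case: (s i) => // x /andP [].
  apply/eqP/setP => i; have := si i; rewrite unfold_in inE.
  by case: (s i) => [x /andP [->]|/negbTE].
rewrite card_transversals_in [RHS]big_mkcond; apply: eq_bigr => i _.
by rewrite card_part_choices; case: (i \in I); rewrite /= ?mul1n ?mul0n.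
Qed.

Lemma card_centerless :
  #|[set s | admissible (None, s)]| = \sum_(I : {set 'I_k} | ~~ odd #|I|) \prod_(i in I) n i.
Proof.
rewrite -sum1_card (partition_big supp (fun I => ~~ odd #|I|)) => [|s]; last first.
  by rewrite inE => /andP [].
apply: eq_bigr => I evI; rewrite -card_supp_eq -sum1_card; apply: eq_bigl => s.
by rewrite !inE /= -andbA; case: eqP => [->|]; rewrite ?evI ?andbF.
Qed.

Lemma card_admissible : #|[set d | admissible d]| =
  \sum_(I : {set 'I_k} | ~~ odd #|I|) \prod_(i in I) n i
    + \sum_(j < k) \prod_(i < k | i != j) (n i).+1.
Proof.
transitivity (\sum_(c : option 'I_k) \sum_(s | admissible (c, s)) 1).
  by rewrite pair_big_dep -sum1dep_card; apply: eq_bigl => -[c s].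
rewrite sum_option sum1dep_card card_centerless; congr (_ + _).
by apply: eq_bigr => j _; rewrite sum1dep_card card_centered.
Qed.

Definition empty_param : param := (None, [ffun => None]).

Lemma admissible_empty_param : admissible empty_param.
Proof.
rewrite /empty_param /=.
have -> : supp [ffun => None] = set0 by apply/setP => i; rewrite !inE ffunE.
by rewrite cards0 andbT; apply/forallP => i; rewrite ffunE.
Qed.

Lemma graph_of_empty_param : graph_of empty_param = complete_multipartite n.
Proof.
apply/setP => -[x y]; rewrite !inE /= /centerless_adj /sel /supported !ffunE /=.
by case: eqP => [->|]; rewrite ?eqxx ?andbF ?andbT //; apply: contra_neq => ->.
Qed.

Lemma connect_param_lc v d : admissible d ->
  connect (@lc_step V) (graph_of d) (graph_of (param_lc v d)).
Proof. by move=> adm; apply/connect1/existsP; exists v; rewrite lc_graph_of. Qed.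

Lemma connect_graph_of d G : admissible d -> connect (@lc_step V) (graph_of d) G ->
  exists2 d', admissible d' & G = graph_of d'.
Proof.
move=> adm /connectP [p]; elim: p d adm => [|H p IHp] d adm /=; first by move=> _ ->; exists d.
case/andP => /existsP [v /eqP ->]; rewrite lc_graph_of //.
by apply: IHp; apply: admissible_param_lc.
Qed.

Definition param_rank d := (#|supp d.2|).*2 + isSome d.1.

Lemma supp_eq0 s : supp s = set0 -> s = [ffun => None].
Proof.
move=> s0; apply/ffunP => i; rewrite ffunE.
have : i \notin supp s by rewrite s0 inE.
by rewrite inE; case: (s i).
Qed.

Hypothesis n_gt1 : forall i, 1 < n i.

Definition vertex0 i : V := Tagged (fun i => 'I_(n i)) (Ordinal (ltnW (n_gt1 i))).

Lemma param_lc_descent d : admissible d -> d != empty_param ->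
  exists v, param_rank (param_lc v d) < param_rank d.
Proof.
case: d => c s /andP [rs sc] nempty; case: (set_0Vmem (supp s)) => [s0|[i]].
  case: c sc nempty => [j /eqP sj _|]; last by rewrite (supp_eq0 s0) eqxx.
  exists (vertex0 j); have := card_supp_upd s j None.
  rewrite /param_lc /pendant /supported /= sj s0 cards0 eqxx /= addn0 => /eqP.
  by rewrite addn0 /param_rank /= s0 cards0 => /eqP ->.
rewrite inE; case si: (s i) => [x|] // _; have tx := respects_partsP rs si; subst i.
have selx : sel s x by rewrite /sel si.
have := card_supp_upd s (tag x) None; rewrite si /= addn0 addn1 => supp'.
exists x; rewrite /param_lc /pendant selx andbF /param_rank /=.
case: c {nempty} sc => [j /eqP sj|_]; last by rewrite /= -supp' doubleS addn0 addn1 ltnSn.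
have jx : j != tag x by apply: contraPneq sj => ->; rewrite si.
by rewrite (negbTE jx) /= -supp' doubleS ltn_add2r ltnS leqnSn.
Qed.

Lemma connect_empty_param d : admissible d ->
  connect (@lc_step V) (graph_of empty_param) (graph_of d).
Proof.
elim: {d}(param_rank d).+1 {-2}d (ltnSn (param_rank d)) => // m IHm d rank_d adm.
have [->|nempty] := eqVneq d empty_param; first exact: connect0.
have [v rank_v] := param_lc_descent adm nempty; have adm_v := admissible_param_lc v adm.
rewrite -(param_lc_involutive v adm); apply: connect_trans (connect_param_lc v adm_v).
exact: IHm (leq_trans rank_v rank_d) adm_v.
Qed.

Lemma lc_orbit_complete_multipartite :
  lc_orbit (complete_multipartite n) = graph_of @: [set d | admissible d].
Proof.
apply/setP => G; rewrite inE -graph_of_empty_param; apply/idP/imsetP => [|[d]].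
  by case/(connect_graph_of admissible_empty_param) => d adm ->; exists d; rewrite ?inE.
by rewrite inE => adm ->; apply: connect_empty_param.
Qed.

Definition vertex1 i : V := Tagged (fun i => 'I_(n i)) (Ordinal (n_gt1 i)).

Lemma exists_twin x : exists2 y, tag y = tag x & y != x.
Proof.
have v01 i : vertex0 i != vertex1 i by rewrite eq_Tagged.
have [->|x0] := eqVneq x (vertex0 (tag x)); first by exists (vertex1 (tag x)); rewrite // eq_sym.
by exists (vertex0 (tag x)); rewrite // eq_sym.
Qed.

Lemma exists_active s i : respects_parts s -> exists2 x, tag x = i & active s x.
Proof.
move=> rs; case si: (s i) => [x|].
  have tx := respects_partsP rs si.
  by exists x; rewrite // /active /sel tx si eqxx orbT.
by exists (vertex0 i); rewrite // /active /supported /= si.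
Qed.

Lemma adj_center j s z x : tag z = j -> j != tag x -> adj (Some j, s) z x = active s x.
Proof. by move=> tz jx; rewrite /adj /centered_adj tz eqxx (negbTE jx). Qed.

Lemma adj_centered_cross j s x y :
  tag x != tag y -> j != tag x -> j != tag y -> adj (Some j, s) x y = false.
Proof. by move=> xy jx jy; rewrite /adj /centered_adj (negbTE xy) (negbTE jx) (negbTE jy). Qed.

Lemma adj_centerless_cross s x y : tag x != tag y -> adj (None, s) x y = active s x && active s y.
Proof. by move=> xy; rewrite /adj /centerless_adj (negbTE xy). Qed.

Lemma tag_neq x y : tag x != tag y -> x != y.
Proof. by apply: contraNneq => ->. Qed.

Lemma adj_eq_of_graph_of_eq d d' x y : graph_of d = graph_of d' -> x != y -> adj d x y = adj d' x y.
Proof. by move=> /setP /(_ (x, y)); rewrite !inE /= => + xy; rewrite xy. Qed.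

Hypothesis k_gt2 : 2 < k.

Lemma exists_other (a b : 'I_k) : exists2 c, c != a & c != b.
Proof.
have : 0 < #|~: [set a; b]|.
  rewrite -(ltn_add2l #|[set a; b]|) addn0 cardsC card_ord cards2.
  by apply: leq_ltn_trans k_gt2; case: (a != b).
by case/card_gt0P => c; rewrite !inE negb_or => /andP [ca cb]; exists c.
Qed.

Lemma centered_graph_of_eq j s c' s' : admissible (Some j, s) -> admissible (c', s') ->
  graph_of (Some j, s) = graph_of (c', s') -> c' = Some j.
Proof.
case/andP => rs _ /andP [rs' _] /adj_eq_of_graph_of_eq E.
case: c' E => [j'|] E.
  have [->//|j'j] := eqVneq j' j.
  have [a aj aj'] := exists_other j j'; have [y ty ay] := exists_active a rs.
  have zy : tag (vertex0 j) != tag y by rewrite ty eq_sym.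
  have j'y : j' != tag y by rewrite ty eq_sym.
  by have := E _ _ (tag_neq zy); rewrite adj_center // ay adj_centered_cross.
have [a aj _] := exists_other j j; have [b bj ba] := exists_other j a.
have [x tx ax] := exists_active a rs'; have [y ty ay] := exists_active b rs'.
have xy : tag x != tag y by rewrite tx ty eq_sym.
have [jx jy] : j != tag x /\ j != tag y by rewrite tx ty !(eq_sym j).
by have := E _ _ (tag_neq xy); rewrite adj_centerless_cross // ax ay adj_centered_cross.
Qed.

Lemma center_eq_of_graph_of_eq c1 s1 c2 s2 : admissible (c1, s1) -> admissible (c2, s2) ->
  graph_of (c1, s1) = graph_of (c2, s2) -> c1 = c2.
Proof.
move=> adm1 adm2 E; case: c1 adm1 E => [j|] adm1 E.
  by rewrite (centered_graph_of_eq adm1 adm2 E).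
by case: c2 adm2 E => [j|//] adm2 /esym E; rewrite (centered_graph_of_eq adm2 adm1 E).
Qed.

Lemma active_transfer c s1 s2 x : admissible (c, s1) -> admissible (c, s2) ->
  graph_of (c, s1) = graph_of (c, s2) -> ~~ in_center c x -> active s1 x -> active s2 x.
Proof.
case/andP => rs1 _ _ /adj_eq_of_graph_of_eq E; case: c E => [j|] E /= jx.
  have zx : tag (vertex0 j) != tag x by [].
  by have := E _ _ (tag_neq zx); rewrite !adj_center // => ->.
have [b bx _] := exists_other (tag x) (tag x); have [z tz az] := exists_active b rs1.
have xz : tag x != tag z by rewrite tz eq_sym.
by have := E _ _ (tag_neq xz); rewrite !adj_centerless_cross // az andbT => -> /andP [].
Qed.

(* Another vertex of the part of x is inactive for s1, hence for s2, so this part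
   is selected in s2, necessarily at its active vertex x. *)
Lemma sel_transfer c s1 s2 x : admissible (c, s1) -> admissible (c, s2) ->
  graph_of (c, s1) = graph_of (c, s2) -> sel s1 x -> sel s2 x.
Proof.
move=> adm1 adm2 E sx.
have s1x : s1 (tag x) = Some x by apply/eqP.
have jx : ~~ in_center c x.
  case: c adm1 {adm2 E} => [j /andP [_ /eqP sj]|//] /=.
  by apply: contraPneq sj => ->; rewrite s1x.
have [y ty yx] := exists_twin x; have jy : ~~ in_center c y by rewrite /in_center ty.
have ny1 : ~~ active s1 y.
  by rewrite /active /supported /sel ty s1x /= (inj_eq (@Some_inj _)) eq_sym.
have ny2 : ~~ active s2 y := contraNN (active_transfer adm2 adm1 (esym E) jy) ny1.
have ax2 : active s2 x by apply: active_transfer adm1 adm2 E jx _; rewrite /active sx orbT.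
by move: ny2 ax2; rewrite /active /supported ty negb_or negbK => /andP [-> _].
Qed.

Lemma graph_of_inj : {in [set d | admissible d] &, injective graph_of}.
Proof.
move=> [c1 s1] [c2 s2]; rewrite !inE => adm1 adm2 E.
have ec := center_eq_of_graph_of_eq adm1 adm2 E; subst c2.
have [/andP [rs1 _] /andP [rs2 _]] := (adm1, adm2).
congr pair; apply/ffunP => i.
case e1: (s1 i) => [x|].
  have tx := respects_partsP rs1 e1; have sx : sel s1 x by rewrite /sel tx e1.
  by have := sel_transfer adm1 adm2 E sx; rewrite /sel tx => /eqP ->.
case e2: (s2 i) => [y|//]; have ty := respects_partsP rs2 e2.
have sy : sel s2 y by rewrite /sel ty e2.
by have := sel_transfer adm2 adm1 (esym E) sy; rewrite /sel ty e1.
Qed.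

End Multipartite.

Theorem theorem7 (k : nat) (n : 'I_k -> nat) :
  3 <= k -> (forall i, 2 <= n i) ->
  #|lc_orbit (complete_multipartite n)| =
    \sum_(I : {set 'I_k} | ~~ odd #|I|) \prod_(i in I) n i
    + \sum_(j < k) \prod_(i < k | i != j) (n i).+1.
Proof.
move=> k_gt2 n_gt1; rewrite (lc_orbit_complete_multipartite n_gt1) card_in_imset.
  exact: card_admissible.
exact: graph_of_inj.
Qed.
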